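(* Let $n \geq 2$ and let $BH_n$ be the $n$-dimensional balanced hypercube. Let $S=\{s_1,\dots,s_{2n-2}\}\subseteq V_0$ and $T=\{t_1,\dots,t_{2n-2}\}\subseteq V_1$ be sets of $2n-2$ distinct vertices each. For $i\in\{0,1,2,3\}$ let $BH_{n-1}^i$ be the subgraph of $BH_n$ induced by the vertices whose $(n-1)$-dimensional index $a_{n-1}$ equals $i$, and put $S_i=V(BH_{n-1}^i)\cap S$, $T_i=V(BH_{n-1}^i)\cap T$, $D_i=|T_i|-|S_i|$, with all indices $i$ taken modulo $4$. Then there exists $i\in\{0,1,2,3\}$ such that $|S_i|\geq |T_i|$ and $|S_{i+1}|\leq |T_{i+1}|$, and furthermore $D_{i+1}+D_{i+2}\geq 0$.
   Context: The $n$-dimensional balanced hypercube $BH_n$ ($n\ge 1$) has vertex set $\{(a_0,a_1,\dots,a_{n-1}) : a_i\in\{0,1,2,3\}\}$ ($4^n$ vertices). A vertex $v=(a_0,\dots,a_{n-1})$ is adjacent to exactly the following $2n$ vertices: $((a_0\pm 1)\bmod 4, a_1,\dots,a_{n-1})$, and, for each $1\le i\le n-1$, $((a_0\pm1)\bmod 4, a_1,\dots,a_{i-1},(a_i+(-1)^{a_0})\bmod 4,a_{i+1},\dots,a_{n-1})$. The coordinate $a_0$ is the inner index and $a_i$ ($1\le i\le n-1$) is the $i$-dimensional index. $BH_n$ is bipartite with bipartition $V_0$ (vertices with even inner index) and $V_1$ (vertices with odd inner index). Each $BH_{n-1}^i$ is isomorphic to $BH_{n-1}$. *)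

From mathcomp Require Import all_boot all_order all_algebra.
Set Implicit Arguments. Unset Strict Implicit. Unset Printing Implicit Defensive.

Definition bh_vertex (n : nat) := (n.-tuple 'I_4)%type.

(* a_i as a natural number (0 if i >= n, never used in that case). *)
Definition coord (n : nat) (v : bh_vertex n) (i : nat) : nat :=
  nat_of_ord (nth ord0 (tval v) i).

(* Adjacency of BH_n (documentation of the graph; the statement only
   involves vertex sets). *)
Definition bh_adj (n : nat) : rel (bh_vertex n) := fun v w =>
  [exists e : 'I_4,
    ((e == 1 :> nat) || (e == 3 :> nat)) &&
    (coord w 0 == (coord v 0 + e) %% 4) &&
    ( [forall j : 'I_n, (0 < j) ==> (coord w j == coord v j)]
      || [exists i : 'I_n, (0 < i) &&
           (coord w i == (coord v i + (if odd (coord v 0) then 3 else 1)) %% 4) &&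
           [forall j : 'I_n, ((0 < j) && (j != i)) ==> (coord w j == coord v j)]])].

Definition V0 (n : nat) : {set bh_vertex n} := [set v | ~~ odd (coord v 0)].
Definition V1 (n : nat) : {set bh_vertex n} := [set v | odd (coord v 0)].

Definition subcube (n : nat) (i : nat) : {set bh_vertex n} :=
  [set v | coord v n.-1 == i %% 4].

Definition Dval (n : nat) (S T : {set bh_vertex n}) (i : nat) : int :=
  (#|subcube n i :&: T|%:Z - #|subcube n i :&: S|%:Z)%R.

(* Only |S| = |T| matters: the differences D_i then sum to zero over the four
   subcubes, and every cyclic integer sequence with zero sum has an index i with
   D_i <= 0 <= D_(i+1) and D_(i+1) + D_(i+2) >= 0.  Otherwise each nonnegative
   term would start an ascent and be followed by a term making the pair sum
   negative, and grouping the sequence into these pairs and the remaining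
   negative terms would give a negative total. *)

From mathcomp Require Import all_boot all_order all_algebra.
From mathcomp Require Import zify.
Import Order.TTheory GRing.Theory Num.Theory.

Section CyclicSums.
Local Open Scope ring_scope.

Lemma zero_sum_cyclic4_ascent (d : nat -> int) :
  (forall k, d (k %% 4)%N = d k) -> \sum_(i < 4) d i = 0 ->
  exists i : 'I_4, [/\ d i <= 0, 0 <= d i.+1 & 0 <= d i.+1 + d i.+2].
Proof.
move=> d_periodic; rewrite !big_ord_recr big_ord0 /= add0r => sum_d0.
have d4 : d 4%N = d 0%N by rewrite -d_periodic.
have d5 : d 5%N = d 1%N by rewrite -d_periodic.
have : (d 0%N <= 0 /\ 0 <= d 1%N /\ 0 <= d 1%N + d 2%N) \/
       (d 1%N <= 0 /\ 0 <= d 2%N /\ 0 <= d 2%N + d 3%N) \/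
       (d 2%N <= 0 /\ 0 <= d 3%N /\ 0 <= d 3%N + d 0%N) \/
       (d 3%N <= 0 /\ 0 <= d 0%N /\ 0 <= d 0%N + d 1%N) by lia.
case=> [|[|[|]]] [? []].
- by exists (inord 0); rewrite inordK.
- by exists (inord 1); rewrite inordK.
- by exists (inord 2); rewrite inordK // d4.
- by exists (inord 3); rewrite inordK // d4 d5.
Qed.

End CyclicSums.

Section Subcubes.
Local Open Scope ring_scope.

Context {n : nat}.
Implicit Types (A S T : {set bh_vertex n}) (k : nat).

Lemma subcube_modn k : subcube n (k %% 4) = subcube n k.
Proof. by rewrite /subcube modn_mod. Qed.

Lemma card_sum_subcube A : #|A| = (\sum_(i < 4) #|subcube n i :&: A|)%N.
Proof.
rewrite -sum1_card (partition_big (fun v : bh_vertex n =>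
   Ordinal (ltn_ord (nth ord0 (tval v) n.-1))) predT) //=.
apply: eq_bigr => i _; rewrite -sum1_card; apply: eq_bigl => v.
by rewrite !inE /coord modn_small // andbC.
Qed.

Lemma Dval_modn S T k : Dval S T (k %% 4) = Dval S T k.
Proof. by rewrite /Dval subcube_modn. Qed.

Lemma sum_Dval S T : #|S| = #|T| -> \sum_(i < 4) Dval S T i = 0.
Proof.
move=> cardST; rewrite /Dval sumrB -!(big_morph Posz PoszD (erefl 0%:Z)).
by rewrite -!card_sum_subcube cardST subrr.
Qed.

Lemma Dval_le0 S T k :
  (Dval S T k <= 0) = (#|subcube n k :&: T| <= #|subcube n k :&: S|)%N.
Proof. by rewrite /Dval subr_le0 lez_nat. Qed.

Lemma Dval_ge0 S T k :
  (0 <= Dval S T k) = (#|subcube n k :&: S| <= #|subcube n k :&: T|)%N.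
Proof. by rewrite /Dval subr_ge0 lez_nat. Qed.

End Subcubes.

Theorem lemma7 (n : nat) (S T : {set bh_vertex n}) :
  2 <= n ->
  S \subset V0 n -> #|S| = (2 * n - 2)%N ->
  T \subset V1 n -> #|T| = (2 * n - 2)%N ->
  exists i : 'I_4,
    [/\ #|subcube n i :&: S| >= #|subcube n i :&: T|,
        #|subcube n i.+1 :&: S| <= #|subcube n i.+1 :&: T|
      & (0 <= Dval S T i.+1 + Dval S T i.+2)%R].
Proof.
move=> _ _ cardS _ cardT.
have sumD0 : (\sum_(i < 4) Dval S T i = 0)%R.
  by apply: sum_Dval; rewrite cardS cardT.
have [i [Di_le0 Di1_ge0 Di12_ge0]] :=
  @zero_sum_cyclic4_ascent _ (Dval_modn S T) sumD0.
rewrite Dval_le0 in Di_le0; rewrite Dval_ge0 in Di1_ge0.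
by exists i.
Qed.
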